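(* Let $X$ be a uniconnected cycle set of square-free odd order. Then $\mathcal{G}(X)$ is a Z-group and $X$ has multipermutation level at most $2$. Moreover, $X$ has multipermutation level $1$ if and only if $\mathcal{G}(X)$ is abelian.
   Context: A (non-degenerate) cycle set is a set $X$ with an operation such that each $\sigma_x:y\mapsto x\cdot y$ is bijective, $(x\cdot y)\cdot(x\cdot z)=(y\cdot x)\cdot(y\cdot z)$, and $x\mapsto x\cdot x$ is bijective. $\mathcal{G}(X)$ is the permutation group generated by the $\sigma_x$; $X$ is uniconnected if $\mathcal{G}(X)$ acts regularly on $X$. A Z-group is a finite group with all Sylow subgroups cyclic. $\mathrm{Ret}(X)$ is the quotient of $X$ by $x\sim y\iff\sigma_x=\sigma_y$; $\mathrm{Ret}^0(X)=X$, $\mathrm{Ret}^i(X)=\mathrm{Ret}(\mathrm{Ret}^{i-1}(X))$; the multipermutation level is the least $n$ with $|\mathrm{Ret}^n(X)|=1$. *)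

From mathcomp Require Import all_boot all_fingroup all_solvable.
Set Implicit Arguments. Unset Strict Implicit. Unset Printing Implicit Defensive.
Local Open Scope group_scope.

(* A (non-degenerate) cycle set structure on a finite type T with
   operation op, where op x y is x . y *)
Definition cycle_set (T : finType) (op : T -> T -> T) : Prop :=
  [/\ (forall x, bijective (op x)),
      (forall x y z, op (op x y) (op x z) = op (op y x) (op y z))
    & bijective (fun x => op x x)].

Definition sigma_set (T : finType) (op : T -> T -> T) : {set {perm T}} :=
  [set s : {perm T} | [exists x, [forall y, s y == op x y]]].

Definition permG (T : finType) (op : T -> T -> T) : {set {perm T}} :=
  <<sigma_set op>>.

Definition uniconnected (T : finType) (op : T -> T -> T) : Prop :=
  forall x y : T, exists! g : {perm T}, g \in permG op /\ g x = y.

Definition squarefree (n : nat) : Prop :=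
  forall p, prime p -> ~~ ((p * p)%N %| n).

Record magma := Magma { carrier :> finType; mop : carrier -> carrier -> carrier }.

Section Retraction.
Variable M : magma.

Definition ret_rel (x y : M) : bool := [forall z, mop x z == mop y z].
Definition ret_cls (x : M) : {set M} := [set y | ret_rel x y].
Definition ret_classes : {set {set M}} := ret_cls @: [set: M].
Definition ret_type : finType := {C : {set M} | C \in ret_classes}.
Definition ret_proj (x : M) : ret_type :=
  exist (fun C => C \in ret_classes) (ret_cls x) (imset_f ret_cls (in_setT x)).
Definition ret_op (C D : ret_type) : ret_type :=
  match [pick x in val C], [pick y in val D] with
  | Some x, Some y => ret_proj (mop x y)
  | _, _ => C
  end.
Definition Ret : magma := Magma ret_op.
End Retraction.

Definition cs_magma (T : finType) (op : T -> T -> T) : magma := Magma op.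

Definition Retn (n : nat) (M : magma) : magma := iter n Ret M.

Definition has_mpl (M : magma) (n : nat) : Prop :=
  #|Retn n M| = 1%N /\ forall m, (m < n)%N -> #|Retn m M| <> 1%N.

From HB Require Import structures.
From mathcomp Require Import all_boot all_fingroup all_solvable zify.
Set Implicit Arguments. Unset Strict Implicit. Unset Printing Implicit Defensive.

(* The group G(X) carries a brace structure: an abelian group (B, +) on the same
   set, and an action g |-> lam_g of G(X) on B by automorphisms, such that
   g o u = g + lam_g(u) and lam_g(sigma_x^-1) = sigma_(g x)^-1.  As |G(X)| = |X| is
   square-free, each p-component B_p of B is cyclic of order 1 or p and every lam_g
   acts on it as a scalar, so the lam_g commute, and an element of B_q can only move
   B_p if q divides p - 1.  From this, for every prime p either B_p is fixed by all
   lam_g or B_p lies in the kernel of lam; hence lam_(lam_g(a)) = lam_a.  Since G(X)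
   is transitive, lam is then constant on the sigma_x^-1, which says exactly that
   sigma_(x.z) = sigma_(y.z): Ret^2(X) is trivial.  If G(X) is abelian, comparing
   the p-components of b o c = c o b shows that lam is trivial, hence all sigma_x
   coincide. *)

Lemma expn_eq1_mod n q k : coprime q (totient n) -> coprime k n ->
  k ^ q = 1 %[mod n] -> k = 1 %[mod n].
Proof.
move=> co_q co_k kq1.
have [n0 | n_gt0] := posnP n.
  by move: co_q kq1; rewrite n0 /coprime /totient gcdn0 => /eqP->; rewrite expn1.
have [a _] : {a | a < totient n & totient n %| gcdn (totient n) q + a * q}.
  by apply: Bezoutl; rewrite totient_gt0.
rewrite gcdnC (eqP co_q).
case/dvdnP=> j def_j; have Ek := Euler_exp_totient co_k.
have kaq : k ^ (a * q) = 1 %[mod n] by rewrite mulnC expnM -modnXm kq1 modnXm exp1n.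
have : k ^ (1 + a * q) = 1 %[mod n].
  by rewrite def_j mulnC expnM -modnXm Ek modnXm exp1n.
by rewrite expnD expn1 -modnMmr kaq modnMmr muln1.
Qed.

Section Retraction.

Variable M : magma.

Lemma ret_relP (x y : M) : reflect (forall z, mop x z = mop y z) (ret_rel x y).
Proof. by apply: (iffP forallP) => xy z; apply/eqP. Qed.

Lemma ret_proj_eq (x y : M) : (ret_proj x == ret_proj y) = ret_rel x y.
Proof.
rewrite -val_eqE /=; apply/eqP/ret_relP => [eq_xy z | xy].
  have : y \in ret_cls x by rewrite eq_xy inE; apply/ret_relP.
  by rewrite inE => /ret_relP->.
by apply/setP => w; rewrite !inE; apply/ret_relP/ret_relP => xw z; rewrite -xw xy.
Qed.

Lemma ret_projP (C : Ret M) : exists x, C = ret_proj x.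
Proof. by case: C => C /[dup] /imsetP[x _ ->] RC; exists x; apply: val_inj. Qed.

Lemma card_Ret_eq1 (x0 : M) : #|Ret M| = 1 <-> forall x y : M, ret_rel x y.
Proof.
split=> [Ret1 x y | all_rel].
  have /card_le1_eqP Ret_eq : #|Ret M| <= 1 by rewrite Ret1.
  by rewrite -ret_proj_eq; apply/eqP/Ret_eq; rewrite inE.
rewrite -cardsT; apply/eqP/cards1P; exists (ret_proj x0); apply/setP => C.
by have [x ->] := ret_projP C; rewrite !inE ret_proj_eq all_rel.
Qed.

Hypothesis ret_rel_op : forall x y y' : M, ret_rel y y' -> ret_rel (mop x y) (mop x y').

Lemma ret_op_proj (x y : M) : ret_op (ret_proj x) (ret_proj y) = ret_proj (mop x y).
Proof.
have rel_refl (z : M) : ret_rel z z by apply/ret_relP.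
rewrite /ret_op /=; case: pickP => [x' | /(_ x)]; last by rewrite inE rel_refl.
case: pickP => [y' | /(_ y)]; last by rewrite inE rel_refl.
rewrite !inE => yy' /ret_relP xx'; apply/eqP; rewrite ret_proj_eq.
by apply/ret_relP => z; rewrite -xx'; move/ret_relP: (ret_rel_op x yy') => ->.
Qed.

End Retraction.

Lemma card_Ret2_eq1 (M : magma) (x0 : M) :
  (forall x y y' : M, ret_rel y y' -> ret_rel (mop x y) (mop x y')) ->
  (forall x y z : M, ret_rel (mop x z) (mop y z)) -> #|Retn 2 M| = 1.
Proof.
move=> rel_op rel_opl; change (#|Ret (Ret M)| = 1).
apply/(@card_Ret_eq1 (Ret M) (ret_proj x0)) => C D.
have [x ->] := ret_projP C; have [y ->] := ret_projP D.
apply/ret_relP => Z; have [z ->] := ret_projP Z.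
by rewrite /= !ret_op_proj //; apply/eqP; rewrite ret_proj_eq.
Qed.

Lemma has_mpl_le (M : magma) n : #|Retn n M| = 1 -> exists2 k, k <= n & has_mpl M k.
Proof.
move=> Rn; have exP : exists k, #|Retn k M| == 1 by exists n; rewrite Rn.
case: (ex_minnP exP) => k /eqP Rk min_k; exists k; first exact: min_k (introT eqP Rn).
by split=> // j lt_jk /eqP/min_k; rewrite leqNgt lt_jk.
Qed.

Lemma has_mpl1 (M : magma) : #|M| != 1 -> has_mpl M 1 <-> #|Ret M| = 1.
Proof. by move=> /eqP M1; split=> [[] | R1] //; split=> // -[]. Qed.

Local Open Scope group_scope.

Lemma prod_constt_prime (gT : finGroupType) (x : gT) :
  \prod_(p < #[x].+1 | prime p) x.`_p = x.
Proof.
rewrite -[RHS]prod_constt big_mkord big_mkcond; apply: eq_bigr => p _.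
case: ifP => // /negbT np; apply/esym; apply/constt1P/pnatP => // q pr_q _.
by rewrite !inE; apply: contraNneq np => <-.
Qed.

Lemma partn_squarefree n p : squarefree n -> prime p -> n`_p %| p.
Proof.
move=> sqn pr_p; rewrite p_part -[X in _ %| X](expn1 p) dvdn_Pexp2l ?prime_gt1 // leqNgt.
apply: contra (sqn p pr_p) => lt1log; rewrite mulnn.
exact: dvdn_trans (dvdn_exp2l p lt1log) (pfactor_dvdnn p n).
Qed.

Lemma cyclic_dvd_prime (gT : finGroupType) (G : {group gT}) p :
  prime p -> #|G| %| p -> cyclic G.
Proof.
move=> pr_p; case/primeP: (pr_p) => _ dvd_p /dvd_p /orP[] /eqP cardG.
  by rewrite (card1_trivg cardG) cyclic1.
by rewrite prime_cyclic // cardG.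
Qed.

Lemma Zgroup_squarefree (gT : finGroupType) (G : {group gT}) :
  squarefree #|G| -> Zgroup G.
Proof.
move=> sqG; apply/forall_inP => P /SylowP[p pr_p sylP].
by apply: (cyclic_dvd_prime pr_p); rewrite (card_Hall sylP) partn_squarefree.
Qed.

Section Brace.

(* [B] is the additive group of a left brace, written multiplicatively; its circle
   product g o u = g * lam g u is realised in [gT] through [m], which reverses the
   factors because permutations compose left to right. *)
Variables (B gT : finGroupType) (m : B -> gT) (lam : B -> B -> B).

Hypothesis mulBC : commutative (@mulg B).
Hypothesis m_inj : injective m.
Hypothesis lamM : forall g, {morph lam g : u v / u * v}.
Hypothesis m_circ : forall g u, m (g * lam g u) = m u * m g.

Lemma lamg1 g : lam g 1 = 1.
Proof. by apply: (mulgI (lam g 1)); rewrite -lamM !mulg1. Qed.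

Lemma lamgX g u n : lam g (u ^+ n) = lam g u ^+ n.
Proof. by elim: n => [|n IHn]; rewrite ?lamg1 // !expgS lamM IHn. Qed.

Lemma m1 : m 1 = 1.
Proof.
by have := m_circ 1 1; rewrite lamg1 mulg1 => /(congr1 (mulg (m 1)^-1)); rewrite mulVg mulKg.
Qed.

Lemma lam_inj g : injective (lam g).
Proof. by move=> u v /(congr1 (fun w => m (g * w))); rewrite !m_circ => /mulIg /m_inj. Qed.

Lemma lam_circ g h u : lam (g * lam g h) u = lam g (lam h u).
Proof.
apply: (mulgI (g * lam g h)); apply: m_inj.
by rewrite m_circ -mulgA -lamM !m_circ mulgA.
Qed.

Lemma lam1 u : lam 1 u = u.
Proof. by apply: (@lam_inj 1); rewrite -lam_circ lamg1 mulg1. Qed.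

Lemma lamK g h : m g * m h = 1 -> cancel (lam g) (lam h).
Proof.
move=> gh1 u; rewrite -lam_circ (_ : h * lam h g = 1) ?lam1 //.
by apply: m_inj; rewrite m_circ m1.
Qed.

Fixpoint circX g n := if n is n'.+1 then g * lam g (circX g n') else 1.

Lemma m_circX g n : m (circX g n) = m g ^+ n.
Proof. by elim: n => [|n IHn] /=; rewrite ?m1 // m_circ IHn expgSr. Qed.

Lemma lam_circX g n u : lam (circX g n) u = iter n (lam g) u.
Proof. by elim: n => [|n IHn] /=; rewrite ?lam1 // lam_circ IHn. Qed.

Lemma order_lam g u : #[lam g u] = #[u].
Proof.
apply/eqP; rewrite eqn_dvd !order_dvdn -lamgX expg_order lamg1 eqxx /=.
by rewrite -(inj_eq (@lam_inj g)) lamgX expg_order lamg1.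
Qed.

Lemma abelianB : abelian [set: B].
Proof. by apply/centsP => y _ z _; apply: mulBC. Qed.

Local Notation Bp p := 'O_p([set: B]).

Lemma mem_Bp p x : (x \in Bp p) = p.-elt x.
Proof.
have BpHall := nilpotent_pcore_Hall p (abelian_nil abelianB).
exact: mem_normal_Hall BpHall (pcore_normal _ _) (in_setT x).
Qed.

Lemma lam_Bp p g x : x \in Bp p -> lam g x \in Bp p.
Proof. by rewrite !mem_Bp /p_elt order_lam. Qed.

Lemma constt_Bp p x : x.`_p \in Bp p.
Proof. by rewrite mem_Bp p_elt_constt. Qed.

Lemma finv_lam_Bp p g c : c \in Bp p -> finv (lam g) c \in Bp p.
Proof.
rewrite !mem_Bp /p_elt -(order_lam g (finv _ _)) f_finv //; exact: lam_inj.
Qed.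

Lemma eq_morph_Bp (f1 f2 : B -> B) :
  {morph f1 : u v / u * v} -> {morph f2 : u v / u * v} ->
  (forall p x, prime p -> x \in Bp p -> f1 x = f2 x) -> f1 =1 f2.
Proof.
move=> f1M f2M f12 x.
have f1_1 : f1 1 = 1 by apply: (mulgI (f1 1)); rewrite -f1M !mulg1.
have f2_1 : f2 1 = 1 by apply: (mulgI (f2 1)); rewrite -f2M !mulg1.
rewrite -(prod_constt_prime x) (big_morph f1 f1M f1_1) (big_morph f2 f2M f2_1).
by apply: eq_bigr => p pr_p; apply: f12 (constt_Bp p x).
Qed.

Lemma circ_ind (P : B -> Prop) :
  P 1 -> (forall g h, P g -> P h -> P (g * lam g h)) ->
  (forall p x, prime p -> x \in Bp p -> P x) -> forall g, P g.
Proof.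
move=> P1 Pcirc PBp g; rewrite -(prod_constt_prime g).
elim/big_rec: _ => // p x pr_p Px.
rewrite mulBC -[g.`_p](f_finv (@lam_inj x)); apply: Pcirc => //.
exact: PBp pr_p (finv_lam_Bp _ (constt_Bp p g)).
Qed.

Hypothesis sqfB : squarefree #|B|.

Lemma card_Bp p : prime p -> #|Bp p| %| p.
Proof.
move=> pr_p; have BpHall := nilpotent_pcore_Hall p (abelian_nil abelianB).
by rewrite (card_Hall BpHall) cardsT partn_squarefree.
Qed.

Lemma Bp_cyclic p : prime p -> cyclic (Bp p).
Proof. by move=> pr_p; apply: (cyclic_dvd_prime pr_p); apply: card_Bp. Qed.

Lemma lam_Bp_scalar p g : prime p -> exists k, {in Bp p, forall c, lam g c = c ^+ k}.
Proof.
move=> /Bp_cyclic/cyclicP[y defBp].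
have : lam g y \in <[y]> by rewrite -defBp lam_Bp // defBp cycle_id.
case/cycleP=> k lam_gy; exists k => c; rewrite defBp => /cycleP[j ->].
by rewrite lamgX lam_gy -!expgM mulnC.
Qed.

Lemma lam_comm g h u : lam g (lam h u) = lam h (lam g u).
Proof.
apply: (@eq_morph_Bp (fun u => lam g (lam h u)) (fun u => lam h (lam g u))) => {u}.
- by move=> u v /=; rewrite !lamM.
- by move=> u v /=; rewrite !lamM.
move=> p c pr_p Bc /=.
have [kg lam_g] := lam_Bp_scalar g pr_p; have [kh lam_h] := lam_Bp_scalar h pr_p.
by rewrite lam_h // lamgX lam_g // lamgX lam_h // -!expgM mulnC.
Qed.

Lemma m_Bp_order q b : prime q -> b \in Bp q -> m b ^+ q = 1.
Proof.
move=> pr_q Bb.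
have mBq : group_set (m @: Bp q).
  apply/group_setP; split; first by apply/imsetP; exists 1; rewrite ?m1.
  move=> _ _ /imsetP[x Bx ->] /imsetP[y By ->]; apply/imsetP.
  by exists (y * lam y x); rewrite ?groupM ?lam_Bp ?m_circ.
apply/eqP; rewrite -order_dvdn.
apply: dvdn_trans (@order_dvdG _ (Group mBq) _ (imset_f m Bb)) _.
by rewrite /= (card_in_imset (in2W m_inj)) card_Bp.
Qed.

Lemma lam_Bp_order q b u : prime q -> b \in Bp q -> iter q (lam b) u = u.
Proof.
move=> pr_q Bb; rewrite -lam_circX (_ : circX b q = 1) ?lam1 //.
by apply: m_inj; rewrite m_circX m_Bp_order ?m1.
Qed.

Lemma lam_Bp_fix p q b c : prime p -> prime q -> ~~ (q %| p.-1) ->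
  b \in Bp q -> c \in Bp p -> lam b c = c.
Proof.
move=> pr_p pr_q q_p1 Bb; have [k lam_b] := lam_Bp_scalar b pr_p.
have /cyclicP[y defBp] := Bp_cyclic pr_p; have By : y \in Bp p by rewrite defBp cycle_id.
suff lam_by : lam b y = y by rewrite defBp => /cycleP[j ->]; rewrite lamgX lam_by.
have : #[y] %| p by rewrite /order -defBp card_Bp.
case/primeP: (pr_p) => _ dvd_p /dvd_p /orP[] /eqP oy.
  by move/eqP: oy; rewrite order_eq1 => /eqP->; rewrite lamg1.
have iter_by n : iter n (lam b) y = y ^+ (k ^ n).
  by elim: n => //= n ->; rewrite lamgX lam_b // -expgM -expnS.
have kq1 : k ^ q = 1 %[mod p].
  by apply/eqP; rewrite -oy -eq_expg_mod_order expg1 -iter_by lam_Bp_order.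
have co_kp : coprime k p.
  rewrite coprime_sym prime_coprime //; apply/negP => /dvdnP[j def_k].
  have /lam_inj y1 : lam b y = lam b 1.
    by rewrite lam_b // def_k mulnC expgM -oy expg_order expg1n lamg1.
  by move: pr_p; rewrite -oy y1 order1.
rewrite lam_b //; apply/eqP; rewrite -{2}[y]expg1 eq_expg_mod_order oy.
apply/eqP; apply: expn_eq1_mod co_kp kq1.
by rewrite totient_prime // prime_coprime.
Qed.

Lemma lam_Bp_self p d c : prime p -> d \in Bp p -> c \in Bp p -> lam d c = c.
Proof.
move=> pr_p; apply: lam_Bp_fix => //.
by rewrite -prime_coprime // coprimenP ?prime_gt0.
Qed.

Lemma lam_Bp_expg p d n u : prime p -> d \in Bp p ->
  lam (d ^+ n) u = iter n (lam d) u.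
Proof.
move=> pr_p Bd; rewrite -lam_circX; congr lam.
by elim: n => //= n <-; rewrite (lam_Bp_self pr_p) ?groupX // expgS.
Qed.

Lemma lam_lam_Bp p q b d u : prime p -> prime q -> ~~ (p %| q.-1) ->
  b \in Bp q -> d \in Bp p -> lam (lam b d) u = lam d u.
Proof.
move=> pr_p pr_q p_q1 Bb Bd; apply: (@lam_inj b).
by rewrite lam_comm -!lam_circ (lam_Bp_fix pr_q pr_p p_q1 (lam_Bp b Bd) Bb) mulBC.
Qed.

(* lam_b acts on B_p as c |-> c ^+ k with k <> 1 (mod p), and lam_(lam_b d) = lam_d,
   so lam_d = lam_(d ^+ k): lam_(d ^+ k.-1) is trivial and d ^+ k.-1 generates <[d]>. *)
Lemma Bp_ker_of_moved p q b c : prime p -> prime q -> q %| p.-1 ->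
  b \in Bp q -> c \in Bp p -> lam b c != c -> forall d u, d \in Bp p -> lam d u = u.
Proof.
move=> pr_p pr_q q_p1 Bb Bc moved d u Bd.
have p_q1 : ~~ (p %| q.-1).
  have p_gt1 := prime_gt1 pr_p; have q_gt1 := prime_gt1 pr_q.
  have : q <= p.-1 by apply: dvdn_leq q_p1; lia.
  by apply: contraTN => /dvdn_leq; lia.
have [k lam_b] := lam_Bp_scalar b pr_p.
have k_gt0 : 0 < k.
  rewrite lt0n; apply: contraNneq moved => k0.
  suff c1 : c = 1 by rewrite c1 lamg1.
  by apply: (@lam_inj b); rewrite lam_b // k0 lamg1.
have co_dk : coprime #[d] k.-1.
  have := dvdn_trans (order_dvdG Bd) (card_Bp pr_p).
  case/primeP: (pr_p) => _ dvd_p /dvd_p /orP[] /eqP->; first exact: coprime1n.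
  rewrite prime_coprime //; apply: contra moved => p_k1.
  have := dvdn_trans (order_dvdG Bc) (dvdn_trans (card_Bp pr_p) p_k1).
  by rewrite order_dvdn lam_b // -{2}(prednK k_gt0) expgSr => /eqP->; rewrite mul1g.
have lam_dk1 v : lam (d ^+ k.-1) v = v.
  rewrite -[v](f_finv (@lam_inj d)) (lam_Bp_expg _ _ pr_p) // -iterSr prednK //.
  by rewrite -(lam_Bp_expg _ _ pr_p) // -lam_b // (lam_lam_Bp _ pr_p pr_q).
have : d \in <[d ^+ k.-1]>.
  by move: co_dk; rewrite -generator_coprime => /eqP<-; apply: cycle_id.
case/cycleP=> j ->; rewrite (lam_Bp_expg _ _ pr_p) ?groupX //.
exact: iter_fix.
Qed.

Lemma Bp_fixed_or_ker p : prime p ->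
  (forall g c, c \in Bp p -> lam g c = c) \/ (forall d u, d \in Bp p -> lam d u = u).
Proof.
move=> pr_p.
pose fixes (q : nat) := [forall b in Bp q, [forall c in Bp p, lam b c == c]].
have [/allP fixed | /allPn[q]] := boolP (all fixes (primes p.-1)); last first.
  rewrite mem_primes => /and3P[pr_q _ q_p1] /forall_inPn[b Bb /forall_inPn[c Bc moved]].
  by right; apply: Bp_ker_of_moved pr_p pr_q q_p1 Bb Bc moved.
left; apply: circ_ind => [c _ | g h fix_g fix_h c Bc | q b pr_q Bb c Bc].
- exact: lam1.
- by rewrite lam_circ fix_h ?fix_g.
have [q_p1 | /(lam_Bp_fix pr_p pr_q)-> //] := boolP (q %| p.-1).
have : q \in primes p.-1 by rewrite mem_primes pr_q q_p1 -subn1 subn_gt0 prime_gt1.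
by move/fixed/forall_inP/(_ b Bb)/forall_inP/(_ c Bc)/eqP.
Qed.

Definition lam_neutral k := forall g u, lam (g * k) u = lam g u.

Lemma lam_neutral_Bp p c : (forall d u, d \in Bp p -> lam d u = u) ->
  c \in Bp p -> lam_neutral c.
Proof.
move=> ker_p Bc g u; rewrite -[c](f_finv (@lam_inj g)) lam_circ.
by rewrite (ker_p _ _ (finv_lam_Bp g Bc)).
Qed.

Lemma lam_lam g a u : lam (lam g a) u = lam a u.
Proof.
pose R x y := exists2 k, lam_neutral k & x = y * k.
suff [k neutral_k ->] : R (lam g a) a by apply: neutral_k.
rewrite -{1}(prod_constt_prime a) (big_morph (lam g) (lamM g) (lamg1 g)).
rewrite -[X in R _ X](prod_constt_prime a).
apply: big_ind2 => [|x1 x2 y1 y2 [k1 nk1 ->] [k2 nk2 ->] | p pr_p].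
- by exists 1 => [h v|]; rewrite mulg1.
- exists (k1 * k2) => [h v|]; first by rewrite mulgA nk2 nk1.
  by rewrite -!mulgA; congr (_ * _); rewrite !mulgA (mulBC k1).
have [fixed | ker_p] := Bp_fixed_or_ker pr_p.
  by exists 1 => [h v|]; rewrite mulg1 // fixed ?constt_Bp.
exists ((a.`_p)^-1 * lam g a.`_p); last by rewrite mulKVg.
by apply: (lam_neutral_Bp ker_p); rewrite groupM ?groupV ?lam_Bp ?constt_Bp.
Qed.

Lemma lam_trivial : (forall g h, commute (m g) (m h)) -> forall g u, lam g u = u.
Proof.
move=> mC; apply: circ_ind => [u | g h lam_g lam_h u | q b pr_q Bb].
- exact: lam1.
- by rewrite lam_circ lam_h lam_g.
apply: (@eq_morph_Bp (lam b) id) => // p c pr_p Bc /=.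
have [eq_pq | neq_pq] := eqVneq p q.
  by rewrite eq_pq in Bc; apply: lam_Bp_self pr_q Bb Bc.
have Bq_p1 x : x \in Bp q -> x.`_p = 1.
  rewrite mem_Bp => qx; apply/constt1P.
  by apply: sub_in_pnat qx => r _; rewrite !inE => /eqP->; rewrite eq_sym.
have Bp_p x : x \in Bp p -> x.`_p = x by rewrite mem_Bp => /constt_p_elt.
have : b * lam b c = c * lam c b by apply: m_inj; rewrite !m_circ; apply: mC.
move/(congr1 (constt^~ p)); rewrite /= !consttM; try exact: mulBC.
rewrite (Bq_p1 b) // (Bq_p1 (lam c b)) ?lam_Bp // (Bp_p c) //.
by rewrite (Bp_p (lam b c)) ?lam_Bp // mul1g mulg1.
Qed.

End Brace.

Section CycleSetBrace.

Variables (T : finType) (op : T -> T -> T).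
Hypothesis csX : cycle_set op.

Lemma op_inj x : injective (op x).
Proof. by case: csX => bij_op _ _; apply: bij_inj. Qed.

Definition sigma x : {perm T} := perm (@op_inj x).

Lemma sigmaE x y : sigma x y = op x y.
Proof. by rewrite permE. Qed.

Lemma sigma_cycle x y : sigma x * sigma (op x y) = sigma y * sigma (op y x).
Proof. by apply/permP => z; rewrite !permM !sigmaE; case: csX => _ -> _. Qed.

Lemma sigma_op_r x y y' : sigma y = sigma y' -> sigma (op x y) = sigma (op x y').
Proof.
move=> eq_y; apply: (mulgI (sigma x)).
by rewrite (sigma_cycle x y) (sigma_cycle x y') -(sigmaE y x) -(sigmaE y' x) eq_y.
Qed.

Lemma ret_rel_sigma x y : ret_rel (M := cs_magma op) x y = (sigma x == sigma y).
Proof.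
apply/ret_relP/eqP => [eq_xy | eq_sigma z].
  by apply/permP => z; rewrite !sigmaE; apply: eq_xy.
by rewrite /= -(sigmaE x z) -(sigmaE y z) eq_sigma.
Qed.

Lemma sigma_setE s : (s \in sigma_set op) = [exists x, s == sigma x].
Proof.
rewrite inE; apply/existsP/existsP => -[x sx]; exists x.
  by apply/eqP/permP => y; rewrite sigmaE; apply/eqP; move/forallP: sx.
by apply/forallP => y; rewrite (eqP sx) sigmaE.
Qed.

Lemma sigma_permG x : sigma x \in permG op.
Proof. by apply: mem_gen; rewrite sigma_setE; apply/existsP; exists x. Qed.

Lemma abelian_permG e : (forall x, sigma x = sigma e) -> abelian (permG op).
Proof.
move=> sigma_e; suff sigma_set1 : sigma_set op = [set sigma e].
  by rewrite /permG sigma_set1; apply: cycle_abelian.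
apply/setP => s; rewrite sigma_setE inE.
by apply/existsP/eqP => [[x /eqP->] | ->]; [apply: sigma_e | exists e].
Qed.

(* [phi l] is the element of G(X) represented by the sum of the sigma_x^-1, x in l,
   in the additive structure; [phi_from h l] computes [phi (map h l)]. *)
Fixpoint phi_from (h : {perm T}) (l : seq T) : {perm T} :=
  if l is x :: l' then phi_from (h * sigma (h x)) l' * (sigma (h x))^-1 else 1.

Definition phi := phi_from 1.

Lemma map_permM (f g : {perm T}) l : map f (map g l) = map (g * f) l.
Proof. by rewrite -map_comp; apply: eq_map => z; rewrite permM. Qed.

Lemma map_perm1 l : map (1 : {perm T}) l = l.
Proof. by rewrite -[RHS]map_id; apply: eq_map => z; rewrite perm1. Qed.

Lemma phi_from_map (h k : {perm T}) l : phi_from h (map k l) = phi_from (k * h) l.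
Proof. by elim: l h => [|x l IHl] h //=; rewrite IHl permM mulgA. Qed.

Lemma phi_map (k : {perm T}) l : phi (map k l) = phi_from k l.
Proof. by rewrite /phi phi_from_map mulg1. Qed.

Lemma phi_cons x l : phi (x :: l) = phi (map (sigma x) l) * (sigma x)^-1.
Proof. by rewrite phi_map /phi /= perm1 mul1g. Qed.

Lemma phi1 x : phi [:: x] = (sigma x)^-1.
Proof. by rewrite phi_cons mul1g. Qed.

Lemma phi_permG l : phi l \in permG op.
Proof.
rewrite /phi; elim: l 1 => [|x l IHl] h /=; first exact: group1.
by rewrite groupM ?groupV ?sigma_permG.
Qed.

Lemma phi_swap x y l : phi [:: x, y & l] = phi [:: y, x & l].
Proof.
rewrite phi_cons [phi [:: y, x & l]]phi_cons /= !phi_cons !map_permM -!mulgA -!invMg !sigmaE.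
by rewrite sigma_cycle.
Qed.

Lemma phi_cat l1 l2 : phi (l1 ++ l2) = phi (map (phi l1)^-1 l2) * phi l1.
Proof.
rewrite -[l1]map_perm1; elim: l1 1 l2 => [|x l1 IHl] k l2 /=.
  by rewrite invg1 mulg1 map_perm1.
by rewrite !phi_cons map_cat !map_permM IHl invMg invgK map_permM mulgA.
Qed.

Lemma phi_mul l1 l2 : phi (l1 ++ map (phi l1) l2) = phi l2 * phi l1.
Proof. by rewrite phi_cat map_permM mulgV map_perm1. Qed.

Lemma phi_perm l l' : perm_eq l l' -> phi l = phi l'.
Proof.
have [n] := ubnP (size l); elim: n l l' => // n IHn [|x l] l' /= size_l eq_ll'.
  by move: eq_ll'; rewrite perm_sym => /perm_nilP->.
have phi_consE y s s' : size s = size l -> perm_eq s s' -> phi (y :: s) = phi (y :: s').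
  move=> size_s eq_ss'; rewrite !phi_cons (IHn _ (map (sigma y) s')) ?size_map ?size_s //.
  by rewrite perm_map.
case: l' eq_ll' => [/perm_size // | y l' eq_ll'].
have [eq_xy | neq_xy] := eqVneq x y.
  by rewrite -eq_xy perm_cons in eq_ll' *; apply: phi_consE.
have l_y : y \in l.
  by have := perm_mem eq_ll' y; rewrite !inE eqxx eq_sym (negbTE neq_xy).
rewrite (phi_consE x _ _ (erefl _) (perm_to_rem l_y)) phi_swap; apply: phi_consE.
  by rewrite /= size_rem // prednK //; case: (l) l_y.
rewrite -(perm_cons y) (perm_catCA [:: y] [:: x]); apply: perm_trans eq_ll'.
by rewrite perm_cons perm_sym perm_to_rem.
Qed.

Lemma phi_surj g : g \in permG op -> exists l, phi l = g.
Proof.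
pose im g := exists l, phi l = g.
have imM a b : im a -> im b -> im (a * b).
  by move=> [la <-] [lb <-]; exists (lb ++ map (phi lb) la); apply: phi_mul.
move/gen_prodgP=> [n [s sigma_s ->]]; elim/big_ind: _ => //; first by exists [::].
move=> i _; have := sigma_s i; rewrite sigma_setE => /existsP[x /eqP->].
rewrite -[sigma x]invgK invg_expg; elim: #[_].-1 => [|k IHk]; first by exists [::].
by rewrite expgS; apply: imM IHk; exists [:: x]; apply: phi1.
Qed.

Lemma phi_catr l l1 l2 : phi l1 = phi l2 -> phi (l ++ l1) = phi (l ++ l2).
Proof.
move=> eq_phi; rewrite !(phi_perm (permEl (perm_catC l _))).
by rewrite !phi_cat eq_phi.
Qed.

Definition addG := {g : {perm T} | g \in permG op}.
HB.instance Definition _ := Finite.on addG.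

Lemma word_ex (u : addG) : exists l, phi l == val u.
Proof. by have [l phi_l] := phi_surj (valP u); exists l; apply/eqP. Qed.

Definition word (u : addG) : seq T := xchoose (word_ex u).

Lemma phi_word u : phi (word u) = val u.
Proof. exact/eqP/(xchooseP (word_ex u)). Qed.

Definition addG_mul (u v : addG) : addG := Sub (phi (word u ++ word v)) (phi_permG _).
Definition addG_one : addG := Sub 1 (group1 _).
Definition circ_inv (u : addG) : addG := Sub (val u)^-1 (groupVr (valP u)).
Definition addG_inv (u : addG) : addG :=
  Sub (phi (map (val u) (word (circ_inv u)))) (phi_permG _).

Lemma val_addG_mul u v l1 l2 :
  phi l1 = val u -> phi l2 = val v -> val (addG_mul u v) = phi (l1 ++ l2).
Proof.
move=> phi_l1 phi_l2; rewrite SubK (phi_catr _ (etrans (phi_word v) (esym phi_l2))).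
rewrite !(phi_perm (permEl (perm_catC _ l2))).
by rewrite (phi_catr _ (etrans (phi_word u) (esym phi_l1))).
Qed.

Lemma addG_mulA : associative addG_mul.
Proof.
move=> u v w; apply: val_inj.
rewrite (val_addG_mul (phi_word u) (esym (val_addG_mul (phi_word v) (phi_word w)))).
by rewrite (val_addG_mul (esym (val_addG_mul (phi_word u) (phi_word v))) (phi_word w)) catA.
Qed.

Lemma addG_mul1 : left_id addG_one addG_mul.
Proof.
by move=> u; apply: val_inj; rewrite (@val_addG_mul _ _ [::] _ _ (phi_word u)) ?phi_word.
Qed.

Lemma addG_mulC : commutative addG_mul.
Proof.
move=> u v; apply: val_inj; rewrite !(val_addG_mul (phi_word _) (phi_word _)).
exact/phi_perm/permEl/perm_catC.
Qed.

Lemma addG_mulV : left_inverse addG_one addG_inv addG_mul.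
Proof.
move=> u; rewrite addG_mulC; apply: val_inj.
rewrite (val_addG_mul (phi_word u) (erefl (val (addG_inv u)))) /=.
have -> : map (val u) (word (circ_inv u)) = map (phi (word u)) (word (circ_inv u)).
  by rewrite phi_word.
by rewrite phi_mul !phi_word /= mulVg.
Qed.

HB.instance Definition _ := Finite_isGroup.Build addG addG_mulA addG_mul1 addG_mulV.

Lemma val_addGM (u v : addG) l1 l2 :
  phi l1 = val u -> phi l2 = val v -> val (u * v) = phi (l1 ++ l2).
Proof. exact: val_addG_mul. Qed.

Lemma phi_map_eq (g : addG) l l' :
  phi l = phi l' -> phi (map (val g) l) = phi (map (val g) l').
Proof.
pose lift l : addG := Sub (phi (map (val g) l)) (phi_permG _).
have val_g_lift l0 : val (g * lift l0) = phi l0 * val g.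
  by rewrite (@val_addGM _ (lift l0) _ _ (phi_word g) (erefl _)) -{1}(phi_word g) phi_mul phi_word.
move=> eq_phi; have /mulgI/(congr1 val) : g * lift l = g * lift l'.
  by apply: val_inj; rewrite !val_g_lift eq_phi.
by rewrite !SubK.
Qed.

Definition lam (g u : addG) : addG := Sub (phi (map (val g) (word u))) (phi_permG _).

Lemma val_lam g u l : phi l = val u -> val (lam g u) = phi (map (val g) l).
Proof. by move=> phi_l; rewrite SubK; apply: phi_map_eq; rewrite phi_word. Qed.

Lemma val_circ (g u : addG) : val (g * lam g u) = val u * val g.
Proof.
rewrite (val_addGM (phi_word g) (esym (val_lam g (phi_word u)))).
by rewrite -{1}(phi_word g) phi_mul !phi_word.
Qed.

Lemma lamM g : {morph lam g : u v / u * v}.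
Proof.
move=> u v; apply: val_inj.
rewrite (val_lam g (esym (val_addGM (phi_word u) (phi_word v)))) map_cat.
by rewrite (val_addGM (esym (val_lam g (phi_word u))) (esym (val_lam g (phi_word v)))).
Qed.

Definition atom x : addG := Sub (phi [:: x]) (phi_permG _).

Lemma val_atom x : val (atom x) = (sigma x)^-1.
Proof. exact: phi1. Qed.

Lemma lam_atom g x : lam g (atom x) = atom (val g x).
Proof. by apply: val_inj; rewrite (val_lam g (erefl (val (atom x)))). Qed.

Hypothesis transX : forall x y, exists2 g, g \in permG op & g x = y.
Hypothesis sqfX : squarefree #|permG op|.

Lemma squarefree_addG : squarefree #|{: addG}|.
Proof. by rewrite card_sig. Qed.

Lemma lam_atom_const x y u : lam (atom x) u = lam (atom y) u.
Proof.
have [g Gg <-] := transX y x.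
have -> : atom (g y) = lam (Sub g Gg) (atom y) by rewrite lam_atom.
exact: (lam_lam addG_mulC val_inj lamM val_circ squarefree_addG).
Qed.

Definition sigma_addG x : addG := Sub (sigma x) (sigma_permG x).

Lemma sigma_op_l x y z : sigma (op x z) = sigma (op y z).
Proof.
have atomK w : cancel (lam (atom w)) (lam (sigma_addG w)).
  by apply: (@lamK addG {perm T} val lam val_inj lamM val_circ); rewrite val_atom mulVg.
have sigmaK w : cancel (lam (sigma_addG w)) (lam (atom w)).
  by apply: (@lamK addG {perm T} val lam val_inj lamM val_circ); rewrite val_atom mulgV.
have : lam (sigma_addG x) (atom z) = lam (sigma_addG y) (atom z).
  by rewrite -{1}(sigmaK y (atom z)) (lam_atom_const y x) atomK.
rewrite !lam_atom /= !sigmaE => /(congr1 val); rewrite !val_atom; exact: invg_inj.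
Qed.

Lemma sigma_const_of_abelian : abelian (permG op) -> forall x y, sigma x = sigma y.
Proof.
move=> abG x y; have [g Gg <-] := transX x y.
have lam_triv := lam_trivial addG_mulC val_inj lamM val_circ squarefree_addG.
have : lam (Sub g Gg) (atom x) = atom x.
  by apply: lam_triv => u v; apply: (centsP abG); apply: valP.
by rewrite lam_atom => /(congr1 val); rewrite !val_atom => /invg_inj.
Qed.

End CycleSetBrace.

Lemma card_permG (T : finType) (op : T -> T -> T) (e : T) :
  uniconnected op -> #|permG op| = #|T|.
Proof.
move=> uniX; have inj_e : {in permG op &, injective (fun g : {perm T} => g e)}.
  move=> g h Gg Gh eq_ge; have [k [_ k_uniq]] := uniX e (g e).
  by rewrite -(k_uniq g) ?(k_uniq h).
rewrite -(card_in_imset inj_e); apply: eq_card => y; rewrite inE.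
by have [g [[Gg <-] _]] := uniX e y; rewrite imset_f.
Qed.

Local Close Scope group_scope.

Theorem mainTheorem16 (T : finType) (op : T -> T -> T) :
  cycle_set op -> uniconnected op -> odd #|T| -> squarefree #|T| ->
  [/\ Zgroup (permG op),
      (exists2 n, n <= 2 & has_mpl (cs_magma op) n)
    & 1 < #|T| -> (has_mpl (cs_magma op) 1 <-> abelian (permG op))].
Proof.
(* Oddness of |X| is only used to know that X is nonempty. *)
move=> csX uniX oddX sqX.
have [e _] : exists e : T, true by apply/card_gt0P; case: #|T| oddX.
have transX x y : exists2 g, g \in permG op & g x = y.
  by have [g [[Gg gx] _]] := uniX x y; exists g.
have sqG : squarefree #|permG op| by rewrite (card_permG e uniX).
have rel_sigma := ret_rel_sigma csX.
split; first exact: Zgroup_squarefree.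
  apply: has_mpl_le; apply: (@card_Ret2_eq1 (cs_magma op) e) => [x y y' | x y z].
    by rewrite !rel_sigma => /eqP/(sigma_op_r x)->.
  by rewrite rel_sigma (sigma_op_l csX transX sqG x y).
move=> T_gt1; rewrite has_mpl1 ?neq_ltn ?T_gt1 ?orbT // (@card_Ret_eq1 (cs_magma op) e).
split=> [rel_all | abG].
  by apply: (@abelian_permG _ _ csX e) => x; apply/eqP; rewrite -rel_sigma.
by move=> x y; rewrite rel_sigma (sigma_const_of_abelian csX transX sqG abG x y).
Qed.
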